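(* Let $Y$ be a topological semigroup and $X$ a subsemigroup of $Y$ (with the subspace topology). Suppose there is a continuous homomorphism $h:X\to E$ into a chain-finite semilattice $E$ endowed with the discrete topology such that for every $e\in E$ the set $h^{-1}(e)$ is closed in $Y$. Then $X$ is closed in $Y$.
   Context: A topological semigroup is a topological space with a continuous associative binary operation (no separation axioms assumed here). A semilattice is a commutative semigroup of idempotents. A subset $C$ of a semigroup is a chain if $xy\in\{x,y\}$ for all $x,y\in C$; a semigroup is chain-finite if it has no infinite chain. *)

From mathcomp Require Import all_boot all_order.
From mathcomp Require Import all_classical all_reals topology.
Set Implicit Arguments. Unset Strict Implicit. Unset Printing Implicit Defensive.
Local Open Scope classical_set_scope.

Definition topological_semigroup (Y : topologicalType) (mul : Y -> Y -> Y) :=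
  associative mul /\ continuous (fun p : Y * Y => mul p.1 p.2).

Definition subsemigroup (Y : Type) (mul : Y -> Y -> Y) (X : set Y) :=
  forall x y, X x -> X y -> X (mul x y).

Definition semilattice (E : Type) (op : E -> E -> E) :=
  [/\ associative op, commutative op & idempotent_op op].

Definition chain (E : Type) (op : E -> E -> E) (C : set E) :=
  forall x y, C x -> C y -> op x y = x \/ op x y = y.

Definition chain_finite (E : Type) (op : E -> E -> E) :=
  forall C : set E, chain op C -> finite_set C.

(* h : X -> E (represented by a function on Y, only its values on X matter)
   is continuous from X with the subspace topology to E with the discrete
   topology: the preimage in X of every subset of E is open in X. *)
Definition continuous_to_discrete (Y : topologicalType) (E : Type)
    (X : set Y) (h : Y -> E) :=
  forall A : set E, exists U : set Y, open U /\ X `&` h @^-1` A = X `&` U.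

Definition hom_on (Y E : Type) (mul : Y -> Y -> Y) (op : E -> E -> E)
    (X : set Y) (h : Y -> E) :=
  forall x y, X x -> X y -> h (mul x y) = op (h x) (h y).

(* Order E by x <= y iff xy = x. Chain-finiteness forbids strictly monotone
   sequences, so every nonempty subset of E has minimal and maximal elements
   and a greatest lower bound. Fix z adherent to X. The infima of h over
   X `&` W, W a neighbourhood of z, have a maximal element e: the infimum of
   the germ of h at z. The core "transfer" argument then shows that L z lies
   in X whenever L is a continuous self-map of Y preserving X, intertwining h
   with a map ell satisfying ell (uv) = ell u v, and such that L (b z) lies
   in X for b in X arbitrarily close to z: using the closed fibres, the
   local constancy of h and the joint continuity of the product, the points
   L (z z) and then L z land in the fibre over ell e. Applied to the left
   translations L = mul a (choosing a with h a minimal among potential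
   counterexamples) it shows a z in X for all a in X; applied to L = id it
   gives z in X. *)

From mathcomp Require Import all_boot all_order.
From mathcomp Require Import all_classical all_reals topology.
Set Implicit Arguments. Unset Strict Implicit. Unset Printing Implicit Defensive.
Local Open Scope classical_set_scope.

Section ChainFiniteSemilattice.
Variables (E : Type) (op : E -> E -> E).
Hypotheses (opA : associative op) (opC : commutative op)
  (opI : idempotent_op op) (cfE : chain_finite op).

(* Let R be a partial order all of whose comparable pairs form chains
   (e.g. the semilattice order x <= y iff xy = x, or its dual). Then there is
   no strictly R-descending sequence: its range would be an infinite chain. *)
Lemma no_strict_descent (R : E -> E -> Prop) :
  (forall x y z, R x y -> R y z -> R x z) ->
  (forall x y, R x y -> R y x -> x = y) ->
  (forall x y, R x y -> op x y = x \/ op x y = y) ->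
  forall u : nat -> E, ~ (forall n, R (u n.+1) (u n) /\ u n.+1 <> u n).
Proof.
move=> Rt Ra Rc u descent.
have below m n : (m < n)%N -> R (u n) (u m).
  elim: n => // n IH; rewrite ltnS leq_eqVlt => /orP[/eqP-> | mn].
    exact: (descent n).1.
  exact: Rt (descent n).1 (IH mn).
have distinct m n : (m < n)%N -> u n <> u m.
  move=> mn unm; have [desc_m neq_m] := descent m.
  case: (ltngtP m.+1 n) => [lt_n | gt_n | eq_n].
  - by apply: neq_m; apply: (Ra _ _ desc_m); rewrite -unm; exact: below.
  - by rewrite ltnS leqNgt mn in gt_n.
  - by apply: neq_m; rewrite eq_n.
have u_inj : injective u.
  move=> m n umn; case: (ltngtP m n) => // mn; exfalso.
  - exact: distinct mn (esym umn).
  - exact: distinct mn umn.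
have u_chain : chain op (range u).
  move=> _ _ [m _ <-] [n _ <-].
  case: (ltngtP m n) => [/below|/below|->]; last by rewrite opI; left.
    by case/Rc; rewrite opC => ->; [right|left].
  exact: Rc.
have := cfE u_chain.
rewrite (eq_finite_set (inj_card_eq (in2W u_inj))).
exact: infinite_nat.
Qed.

(* Hence every nonempty set has an R-minimal element (classical choice turns
   the failure of minimality into a strictly descending sequence). *)
Lemma exists_extremal (R : E -> E -> Prop) :
  (forall x y z, R x y -> R y z -> R x z) ->
  (forall x y, R x y -> R y x -> x = y) ->
  (forall x y, R x y -> op x y = x \/ op x y = y) ->
  forall S : set E, S !=set0 -> exists m, S m /\ forall s, S s -> R s m -> s = m.
Proof.
move=> Rt Ra Rc S [s0 Ss0]; apply: contrapT => no_extremal.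
have step x : exists y, S x -> S y /\ R y x /\ y <> x.
  case: (pselect (S x)) => Sx; last by exists x.
  apply: contrapT => no_below; apply: no_extremal; exists x; split => // s Ss Rsx.
  by apply: contrapT => sx; apply: no_below; exists s.
have [f Hf] := choice step.
have Su n : S (iter n f s0) by elim: n => //= n /Hf[].
apply: (@no_strict_descent R Rt Ra Rc (fun n => iter n f s0)) => n.
by have [_] := Hf _ (Su n).
Qed.

Lemma exists_minimal (S : set E) : S !=set0 ->
  exists m, S m /\ forall s, S s -> op s m = s -> s = m.
Proof.
apply: (@exists_extremal (fun s m => op s m = s)).
- by move=> x y z xy yz; rewrite -xy -opA yz.
- by move=> x y xy yx; rewrite -xy opC yx.
- by move=> x y ->; left.
Qed.

Lemma exists_maximal (S : set E) : S !=set0 ->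
  exists m, S m /\ forall s, S s -> op m s = m -> s = m.
Proof.
apply: (@exists_extremal (fun s m => op m s = m)).
- by move=> x y z yx zy; rewrite -zy -opA yx.
- by move=> x y yx xy; rewrite -yx opC xy.
- by move=> x y yx; right; rewrite opC.
Qed.

Inductive generated (A : set E) : E -> Prop :=
| gen_base a : A a -> generated A a
| gen_mul x y : generated A x -> generated A y -> generated A (op x y).
Arguments gen_base {A a}.
Arguments gen_mul {A x y}.

(* Every nonempty A has a greatest lower bound: a minimal element of the
   subsemigroup it generates. *)
Lemma exists_glb (A : set E) : A !=set0 -> exists m,
  (forall a, A a -> op m a = m) /\
  (forall l, (forall a, A a -> op l a = l) -> op l m = l).
Proof.
move=> [a0 Aa0].
have [m [gen_m min_m]] := @exists_minimal (generated A) (ex_intro _ a0 (gen_base Aa0)).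
exists m; split.
- move=> a Aa; apply: min_m; first exact: gen_mul gen_m (gen_base Aa).
  by rewrite opC opA opI.
- move=> l lb; elim: gen_m {min_m} => [a /lb // | x y _ lx _ ly].
  by rewrite opA lx.
Qed.

End ChainFiniteSemilattice.

Lemma near_cvg (T U : topologicalType) (f : T -> U) (x : T) (w : U) :
  f @ x --> w -> forall P, (\forall y \near w, P y) -> \forall t \near x, P (f t).
Proof. by move=> fx P /fx. Qed.

Section ClosedSubsemigroup.
Variables (Y : topologicalType) (mul : Y -> Y -> Y) (X : set Y)
  (E : Type) (op : E -> E -> E) (h : Y -> E).
Hypotheses (mulA : associative mul)
  (mul_cont : continuous (fun p : Y * Y => mul p.1 p.2))
  (Xmul : subsemigroup mul X)
  (opA : associative op) (opC : commutative op) (opI : idempotent_op op)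
  (cfE : chain_finite op)
  (hom : hom_on mul op X h) (h_cont : continuous_to_discrete X h)
  (fibre_closed : forall e, closed (X `&` h @^-1` [set e])).

Lemma cvg_mul (T : Type) (F : set_system T) {FF : Filter F} (f g : T -> Y) (a b : Y) :
  f @ F --> a -> g @ F --> b -> (fun t => mul (f t) (g t)) @ F --> mul a b.
Proof.
by move=> fa gb; apply: (cvg_comp2 fa gb); exact: (@mul_cont (a, b)).
Qed.

Lemma cvg_square (w : Y) : (fun x => mul x x) @ w --> mul w w.
Proof. by apply: cvg_mul; exact: cvg_id. Qed.

Lemma near_near (T : topologicalType) (f : Y -> Y -> T) (z : Y) :
  {for (z, z), continuous (fun p : Y * Y => f p.1 p.2)} ->
  forall P, (\forall t \near f z z, P t) ->
  \forall x \near z, \forall x' \near z, P (f x x').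
Proof. by move=> f_cont P /f_cont near_P; exact: (nearP_dep near_P). Qed.

Lemma locally_constant w : X w -> \forall y \near w, X y -> h y = h w.
Proof.
move=> Xw; have [U [oU XU]] := h_cont [set h w].
have Uw : U w by have [] : (X `&` U) w by rewrite -XU.
apply: filterS (open_nbhs_nbhs (conj oU Uw)) => y Uy Xy.
by have [] : (X `&` h @^-1` [set h w]) y by rewrite XU.
Qed.

Lemma fibre_of_adherent g w :
  (forall N, nbhs w N -> exists x, [/\ X x, h x = g & N x]) -> X w /\ h w = g.
Proof.
move=> adh; apply: fibre_closed => N /adh[x [Xx hx Nx]].
by exists x.
Qed.

Variable z : Y.
Hypothesis z_adh : closure X z.

Definition lower_bound_on (W : set Y) (l : E) :=
  forall x, X x -> W x -> op l (h x) = l.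

Lemma local_glb W : nbhs z W ->
  exists m, lower_bound_on W m /\ forall l, lower_bound_on W l -> op l m = l.
Proof.
move=> W_nbhs; have [x [Xx Wx]] := z_adh W_nbhs.
have [|m [m_lb m_glb]] := exists_glb opA opC opI cfE (A := h @` (X `&` W)).
  by exists (h x), x.
exists m; split; first by move=> y Xy Wy; apply: m_lb; exists y.
by move=> l l_lb; apply: m_glb => _ [y [Xy Wy] <-]; exact: l_lb.
Qed.

(* The infimum e of the germ of h at z: the local infima grow as the
   neighbourhood shrinks, and a maximal one is attained on some V0; then
   every lower bound of h on any neighbourhood of z lies below e. *)
Lemma germ_glb : exists e V0, [/\ nbhs z V0, lower_bound_on V0 e &
  forall W, nbhs z W -> forall l, lower_bound_on W l -> op l e = l].
Proof.
pose M := [set m | exists2 V, nbhs z V &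
  lower_bound_on V m /\ forall l, lower_bound_on V l -> op l m = l].
have [|e [[V0 V0_nbhs [e_lb _]] e_max]] := exists_maximal opA opC opI cfE (S := M).
  by have [m m_glb] := local_glb filterT; exists m, setT; first exact: filterT.
exists e, V0; split => // W W_nbhs l l_lb.
have [m [m_lb m_glb]] := local_glb (filterI W_nbhs V0_nbhs).
have e_le_m : op e m = e by apply: m_glb => x Xx [_ V0x]; exact: e_lb.
rewrite -(e_max m _ e_le_m); last by exists (W `&` V0); first exact: filterI.
by apply: m_glb => x Xx [Wx _]; exact: l_lb.
Qed.

(* Let L be a continuous self-map of Y preserving X and
   intertwining h with a map ell on E that commutes with right
   multiplications (below: a left translation L = mul a with ell = op (h a),
   or the identity). If, arbitrarily close to z, there are b in X with
   L (b z) in X, then L z lies in X. *)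
Section Transfer.
Variables (e : E) (V0 : set Y).
Hypotheses (V0_nbhs : nbhs z V0) (e_lb : lower_bound_on V0 e)
  (e_glb : forall W, nbhs z W -> forall l, lower_bound_on W l -> op l e = l).
Variables (L : Y -> Y) (ell : E -> E).
Hypotheses (L_cont : continuous L) (LX : forall x, X x -> X (L x))
  (hL : forall x, X x -> h (L x) = ell (h x))
  (ellM : forall u v, ell (op u v) = op (ell u) v).
Hypothesis L_returns : forall V, nbhs z V -> exists b, [/\ X b, V b & X (L (mul b z))].

Lemma X_L_mul b x : X b -> X x -> X (L (mul b x)).
Proof. by move=> Xb Xx; apply: LX; exact: Xmul. Qed.

Lemma h_L_mul b x : X b -> X x -> h (L (mul b x)) = ell (op (h b) (h x)).
Proof. by move=> Xb Xx; rewrite hL ?hom //; exact: Xmul. Qed.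

(* Writing g := h (L (b z)), local constancy gives
   ell (h b h x) = g near z; squaring, L (b z z) lies in the fibre over g,
   and joint continuity turns this into g h x' = g near z, i.e. g <= e; the
   reverse inequality ell e >= g comes from h b h x e = e on V0. *)
Lemma returning_germ b : X b -> V0 b -> X (L (mul b z)) ->
  \forall x \near z, X x -> h (L (mul b x)) = ell e.
Proof.
move=> Xb V0b XLbz; set g := h (L (mul b z)).
have cvg_b x : (fun y => mul b y) @ x --> mul b x
  by apply: cvg_mul; [exact: cvg_cst | exact: cvg_id].
have cvg_Lb : (fun x => L (mul b x)) @ z --> L (mul b z).
  exact: cvg_comp _ _ (cvg_b z) (@L_cont _).
have near_g : \forall x \near z, X x -> ell (op (h b) (h x)) = g.
  apply: filterS (near_cvg cvg_Lb (locally_constant XLbz)) => x gx Xx.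
  by rewrite -h_L_mul //; apply: gx; exact: X_L_mul.
have cvg_Lbsq : (fun x => L (mul b (mul x x))) @ z --> L (mul b (mul z z)).
  exact: cvg_comp _ _ (cvg_comp _ _ (@cvg_square z) (cvg_b _)) (@L_cont _).
have [XLbzz hLbzz] : X (L (mul b (mul z z))) /\ h (L (mul b (mul z z))) = g.
  apply: fibre_of_adherent => N /(near_cvg cvg_Lbsq) near_N.
  have [x [Xx [Nx gx]]] := z_adh (filterI near_N near_g).
  exists (L (mul b (mul x x))); split => //; first by apply: X_L_mul => //; exact: Xmul.
  by rewrite h_L_mul ?hom ?opI ?gx //; exact: Xmul.
have cvg_bxy : {for (z, z), continuous (fun p : Y * Y => L (mul b (mul p.1 p.2)))}.
  exact: cvg_comp _ _ (cvg_comp _ _ (@mul_cont (z, z)) (cvg_b _)) (@L_cont _).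
have := near_near (f := fun x y => L (mul b (mul x y))) cvg_bxy
  (locally_constant XLbzz).
move=> /(filterI near_g)/z_adh[x [Xx [gx near_gx]]].
have g_le_e : op g e = g.
  apply: (e_glb near_gx) => y Xy /(_ (X_L_mul Xb (Xmul Xx Xy))).
  rewrite hLbzz h_L_mul ?hom //; last exact: Xmul.
  by rewrite opA ellM (gx Xx) => ->.
have [x0 [Xx0 [gx0 V0x0]]] := z_adh (filterI near_g V0_nbhs).
have e_below : op (op (h b) (h x0)) e = e.
  by rewrite -opA (opC (h x0)) (e_lb Xx0 V0x0) opC (e_lb Xb V0b).
have g_eq : g = ell e by rewrite -e_below ellM gx0.
by apply: filterS near_g => y gy Xy; rewrite h_L_mul // gy.
Qed.

(* Consequently L (z z) lies in the fibre over ell e: near it sit the points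
   L (b x) with b returning and x near z. *)
Lemma returning_square : X (L (mul z z)) /\ h (L (mul z z)) = ell e.
Proof.
have cvg_Lxy : {for (z, z), continuous (fun p : Y * Y => L (mul p.1 p.2))}.
  exact: cvg_comp _ _ (@mul_cont (z, z)) (@L_cont _).
apply: fibre_of_adherent => N /(near_near (f := fun x y => L (mul x y)) cvg_Lxy).
move=> near_N; have [b [Xb [near_Nb V0b] XLbz]] := L_returns (filterI near_N V0_nbhs).
have [x [Xx [Nx ex]]] := z_adh (filterI near_Nb (returning_germ Xb V0b XLbz)).
by exists (L (mul b x)); split => //; [exact: X_L_mul | exact: ex].
Qed.

(* Finally h (L x) = h (L (x x)) = ell e for x in X near z, and the fibre
   over ell e is closed. *)
Lemma returning_point : X (L z).
Proof.
have [XLzz hLzz] := returning_square.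
have cvg_Lsq : (fun x => L (mul x x)) @ z --> L (mul z z).
  exact: cvg_comp _ _ (@cvg_square z) (@L_cont _).
have near_e : \forall x \near z, X x -> h (L x) = ell e.
  apply: filterS (near_cvg cvg_Lsq (locally_constant XLzz)) => x ex Xx.
  by have := ex (X_L_mul Xx Xx); rewrite h_L_mul // opI hLzz -hL.
have [] // : X (L z) /\ h (L z) = ell e.
apply: fibre_of_adherent => N /(near_cvg (@L_cont z)) near_N.
have [x [Xx [Nx ex]]] := z_adh (filterI near_N near_e).
by exists (L x); split => //; [exact: LX | exact: ex].
Qed.

End Transfer.

(* Otherwise pick
   an escaping a with h a minimal; for x in X near z, a x escapes as well
   unless it returns, and minimality forces h (a x) = h a; so either some b
   returns, and the transfer lemma applies to L = mul a, or a z lies in the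
   closed fibre over h a. Both contradict the escape of a. *)
Lemma left_translate_in a : X a -> X (mul a z).
Proof.
move=> Xa; apply: contrapT => a_esc.
pose escaping := [set c | exists a, [/\ X a, ~ X (mul a z) & h a = c]].
have [|c [[{Xa a_esc}a [Xa a_esc ha]] c_min]] :=
  exists_minimal opA opC opI cfE (S := escaping); first by exists (h a), a.
have cvg_a x : (fun y => mul a y) @ x --> mul a x.
  by apply: cvg_mul; [exact: cvg_cst | exact: cvg_id].
have a_returns V : nbhs z V -> exists b, [/\ X b, V b & X (mul a (mul b z))].
  move=> V_nbhs; apply: contrapT => no_return; apply: a_esc.
  have [] // : X (mul a z) /\ h (mul a z) = c.
  apply: fibre_of_adherent => N /(near_cvg (cvg_a z)) near_N.
  have [x [Xx [Nx Vx]]] := z_adh (filterI near_N V_nbhs).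
  exists (mul a x); split => //; first exact: Xmul.
  apply: c_min; last by rewrite hom // ha opC opA opI.
  exists (mul a x); split => //; first exact: Xmul.
  by rewrite -mulA => Xaxz; apply: no_return; exists x.
have [e [V0 [V0_nbhs e_lb e_glb]]] := germ_glb.
apply: a_esc; apply: (returning_point V0_nbhs e_lb e_glb (ell := op c)) => //.
- by move=> x Xx; exact: Xmul.
- by move=> x Xx; rewrite hom // ha.
Qed.

(* The identity map returns by the previous lemma, so z itself lies in X. *)
Lemma adherent_in : X z.
Proof.
have [e [V0 [V0_nbhs e_lb e_glb]]] := germ_glb.
apply: (returning_point V0_nbhs e_lb e_glb (L := id) (ell := id)) => //.
  by move=> x; exact: cvg_id.
move=> V /z_adh[b [Xb Vb]]; exists b; split => //; exact: left_translate_in.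
Qed.

End ClosedSubsemigroup.

Theorem lemma4p1 (Y : topologicalType) (mul : Y -> Y -> Y) (X : set Y)
  (E : Type) (op : E -> E -> E) (h : Y -> E) :
  topological_semigroup mul ->
  subsemigroup mul X ->
  semilattice op ->
  chain_finite op ->
  hom_on mul op X h ->
  continuous_to_discrete X h ->
  (forall e : E, closed (X `&` h @^-1` [set e])) ->
  closed X.
Proof.
move=> [mulA mul_cont] Xmul [opA opC opI] cfE hom h_cont fibre_closed z.
exact: (adherent_in mulA mul_cont Xmul opA opC opI cfE hom h_cont fibre_closed).
Qed.
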